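(* Let $E$ be a finite-dimensional real vector space and $M\subseteq E$ a convex polytope with non-empty interior. If $r>0$ and $\gamma\colon[0,r[\,\to M$ is a $C^1$-map, then there exists $\varepsilon>0$ such that $\gamma(0)+t\gamma'(0)\in M$ for all $t\in[0,\varepsilon]$.
   Context: A convex polytope is the convex hull of a finite set. A map $\gamma\colon[0,r[\,\to E$ is $C^1$ if it is continuous, $C^1$ on $]0,r[$, and $\gamma'$ extends continuously to $[0,r[$ (so $\gamma'(0)$ is this extension's value, equivalently the one-sided derivative at $0$). *)

(* E = 'rV[R]_n with R : realType (a finite-dimensional real vector space). *)
From HB Require Import structures.
From mathcomp Require Import all_boot all_order all_algebra.
From mathcomp Require Import all_classical all_reals all_analysis.
Set Implicit Arguments. Unset Strict Implicit. Unset Printing Implicit Defensive.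
Import Order.TTheory GRing.Theory Num.Theory.
Import numFieldNormedType.Exports.
Local Open Scope classical_set_scope.
Local Open Scope ring_scope.

Definition conv_hull_fin (R : realType) (n k : nat) (v : 'I_k -> 'rV[R]_n)
  : set 'rV[R]_n :=
  [set x | exists l : 'I_k -> R,
     (forall i, 0 <= l i) /\ \sum_(i < k) l i = 1 /\ x = \sum_(i < k) l i *: v i].

Definition convex_polytope (R : realType) (n : nat) (M : set 'rV[R]_n) : Prop :=
  exists (k : nat) (v : 'I_k -> 'rV[R]_n), M = conv_hull_fin v.

(* gamma : [0,r[ -> E is C^1 (values outside [0,r[ are irrelevant), with
   derivative extension dg: gamma is continuous on [0,r[, differentiable on
   ]0,r[, and its derivative agrees on ]0,r[ with dg, continuous on [0,r[.
   Then gamma'(0) := dg 0. *)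
Definition C1_on_halfopen (R : realType) (n : nat) (r : R)
  (gamma dg : R -> 'rV[R]_n) : Prop :=
  {within `[0, r[, continuous gamma} /\
  (forall t, 0 < t < r -> derivable gamma t 1) /\
  (forall t, 0 < t < r -> derive1 gamma t = dg t) /\
  {within `[0, r[, continuous dg}.

(* Let p = gamma 0 and let M be the convex hull of v_0, ..., v_(k-1). For t > 0
   the difference quotient (gamma t - p) / t is a nonnegative combination of the
   vectors v_i - p, since gamma t is a convex combination of the v_i. A cone
   generated by finitely many vectors is closed (Carathéodory's reduction to
   linearly independent generators, whose cone is a preimage of an orthant), and
   by the mean value theorem and continuity of gamma' the difference quotients
   tend to gamma'(0). Hence gamma'(0) = \sum_i mu_i (v_i - p) with mu_i >= 0, and
   p + t gamma'(0) is a convex combination of the v_i while t \sum_i mu_i <= 1. *)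

From HB Require Import structures.
From mathcomp Require Import all_boot all_order all_algebra.
From mathcomp Require Import all_classical all_reals all_analysis.
From mathcomp Require Import lra.
Set Implicit Arguments. Unset Strict Implicit. Unset Printing Implicit Defensive.
Import Order.TTheory GRing.Theory Num.Theory.
Import numFieldNormedType.Exports.
Local Open Scope classical_set_scope.
Local Open Scope ring_scope.

Lemma mulmx_matrix_rows (F : pzSemiRingType) k n (u : 'rV[F]_k)
    (w : 'I_k -> 'rV[F]_n) :
  u *m (\matrix_i w i) = \sum_i u 0 i *: w i.
Proof. by rewrite mulmx_sum_row; under eq_bigr do rewrite rowK. Qed.

Lemma mulmx_col'_row' (F : pzSemiRingType) k n (u : 'rV[F]_k.+1)
    (A : 'M[F]_(k.+1, n)) j :
  u *m A = u 0 j *: row j A + col' j u *m row' j A.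
Proof.
rewrite !mulmx_sum_row (bigD1_ord j) //=; congr (_ + _).
apply: eq_bigr => i _; rewrite !mxE; congr (_ *: _).
by apply/rowP => l; rewrite !mxE.
Qed.

Section ConicHull.
Variables (R : realFieldType) (n : nat).

Definition conic_hull k (A : 'M[R]_(k, n)) : set 'rV[R]_n :=
  [set u *m A | u in [set u : 'rV[R]_k | forall i, 0 <= u 0 i]].

Lemma conic_hullZ k (A : 'M[R]_(k, n)) a x :
  0 <= a -> conic_hull A x -> conic_hull A (a *: x).
Proof.
move=> a_ge0 [u u_ge0 <-]; exists (a *: u); last by rewrite scalemxAl.
by move=> i; rewrite mxE mulr_ge0.
Qed.

Lemma mulmx_coord_continuous m (P : 'M[R]_(n, m)) i :
  continuous (fun x : 'rV[R]_n => (x *m P) 0 i).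
Proof.
have -> : (fun x : 'rV[R]_n => (x *m P) 0 i) = (fun x => \sum_j x 0 j * P j i).
  by apply: funext => x; rewrite mxE.
apply: continuous_big => [|j _ x]; first exact: add_continuous.
apply: (@continuous_comp _ _ _ (fun x : 'rV[R]_n => x 0 j) (fun y => y * P j i)).
  exact: coord_continuous.
exact: mulrr_continuous.
Qed.

(* For row-free A the coefficients u are recovered from u *m A by the
   pseudo-inverse, so the cone is cut out by x *m pinvmx A >= 0 and
   x *m pinvmx A *m A = x. *)
Lemma row_free_conic_hull_closed k (A : 'M[R]_(k, n)) :
  row_free A -> closed (conic_hull A).
Proof.
move=> freeA; set P := pinvmx A.
have -> : conic_hull A = (\bigcap_i [set x | 0 <= (x *m P) 0 i]) `&`
    (\bigcap_i [set x | (x *m (P *m A - 1%:M)) 0 i = 0]).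
  apply/seteqP; split => [_ [u u_ge0 <-]|x [x_ge0 x_eq]].
    have uAP : u *m A *m P = u.
      by apply: (row_free_inj freeA); rewrite mulmxKpV ?submxMl.
    split => i _ /=; first by rewrite uAP.
    by rewrite mulmxBr mulmx1 mulmxA uAP subrr mxE.
  exists (x *m P) => [i|]; first exact: x_ge0.
  have : x *m (P *m A - 1%:M) = 0 by apply/rowP => i; rewrite (x_eq i) ?mxE.
  by rewrite mulmxBr mulmx1 mulmxA => /subr0_eq.
apply: closedI; apply: closed_bigI => i _.
  have /continuous_closedP := mulmx_coord_continuous (P := P) (i := i).
  by move/(_ _ (@closed_ge R 0)).
have /continuous_closedP := mulmx_coord_continuous (P := P *m A - 1%:M) (i := i).
by move/(_ _ (@closed_eq R 0)).
Qed.

Lemma conic_hull_row' k (A : 'M[R]_(k.+1, n)) j :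
  conic_hull (row' j A) `<=` conic_hull A.
Proof.
move=> _ [u u_ge0 <-]; exists (\row_i oapp (u 0) 0 (unlift j i)).
  by move=> i; rewrite mxE; case: unlift.
rewrite (mulmx_col'_row' _ _ j) mxE unlift_none scale0r add0r.
by congr (_ *m _); apply/rowP => i; rewrite !mxE liftK.
Qed.

(* Carathéodory's reduction: move along the linear relation a until the first
   coefficient of u vanishes. *)
Lemma conic_hull_sub_bigcup_row' k (A : 'M[R]_(k.+1, n)) (a : 'rV[R]_k.+1) i0 :
  a *m A = 0 -> 0 < a 0 i0 -> conic_hull A `<=` \bigcup_j conic_hull (row' j A).
Proof.
move=> aA0 a_pos _ [u u_ge0 <-].
have [j aj_pos jmin] :=
  @arg_minP _ _ _ i0 (fun i => 0 < a 0 i) (fun i => u 0 i / a 0 i) a_pos.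
set s := u 0 j / a 0 j.
pose u' := u - s *: a.
have u'_ge0 i : 0 <= u' 0 i.
  rewrite !mxE; have [ai_pos|ai_le0] := ltP 0 (a 0 i).
    by rewrite subr_ge0 -ler_pdivlMr //; exact: jmin.
  have : 0 <= s by rewrite divr_ge0 ?u_ge0 ?ltW.
  by have := u_ge0 i; nra.
have u'j : u' 0 j = 0 by rewrite !mxE /s divfK ?subrr ?gt_eqF.
have -> : u *m A = u' *m A by rewrite mulmxBl -scalemxAl aA0 scaler0 subr0.
exists j => //; exists (col' j u') => [i|]; first by rewrite mxE.
by rewrite (mulmx_col'_row' _ _ j) u'j scale0r add0r.
Qed.

Lemma conic_hull_closed k (A : 'M[R]_(k, n)) : closed (conic_hull A).
Proof.
elim: k A => [|k IH] A.
  by apply: row_free_conic_hull_closed; rewrite /row_free -leqn0 rank_leq_row.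
have [freeA|] := boolP (row_free A); first exact: row_free_conic_hull_closed.
rewrite -kermx_eq0 => /rowV0Pn[a /sub_kermxP aA0 /rV0Pn[i0 ai0]].
wlog a_pos : a aA0 ai0 / 0 < a 0 i0.
  move=> wlog_pos; have [|a_le0] := ltP 0 (a 0 i0); first exact: wlog_pos.
  apply: (wlog_pos (- a)); rewrite ?mulNmx ?aA0 ?oppr0 // mxE ?oppr_eq0 //.
  by rewrite oppr_gt0 lt_neqAle ai0.
suff -> : conic_hull A = \bigcup_j conic_hull (row' j A).
  by apply: closed_bigcup => [|j _]; [exact: finite_finset | exact: IH].
apply/seteqP; split; first exact: conic_hull_sub_bigcup_row' aA0 a_pos.
by move=> x [j _]; exact: conic_hull_row'.
Qed.

End ConicHull.

Section PolytopeCone.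
Variables (R : realType) (n : nat).

Lemma conv_hull_fin_sub_conic_hull k (v : 'I_k -> 'rV[R]_n) p x :
  conv_hull_fin v x -> conic_hull (\matrix_i (v i - p)) (x - p).
Proof.
move=> [l [l_ge0 [l1 ->]]]; exists (\row_i l i) => [i|]; first by rewrite mxE.
rewrite mulmx_matrix_rows; under eq_bigr do rewrite mxE scalerBr.
by rewrite sumrB -scaler_suml l1 scale1r.
Qed.

Lemma conv_hull_fin_add_conic_hull k (v : 'I_k -> 'rV[R]_n) p d :
  conv_hull_fin v p -> conic_hull (\matrix_i (v i - p)) d ->
  exists2 eps : R, 0 < eps &
    forall t, 0 <= t <= eps -> conv_hull_fin v (p + t *: d).
Proof.
move=> [l [l_ge0 [l1 pE]]] [u u_ge0 <-].
set S := \sum_i u 0 i.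
have S_ge0 : 0 <= S by apply: sumr_ge0.
exists (S + 1)^-1 => [|t /andP[t_ge0 t_le]]; first by rewrite invr_gt0; lra.
have tS : t * (S + 1) <= 1 by rewrite -ler_pdivlMr ?div1r //; lra.
(* p + t d = (1 - t S) p + t \sum_i u_i v_i, a convex combination as t S <= 1. *)
exists (fun i => (1 - t * S) * l i + t * u 0 i); split; [|split].
- by move=> i; rewrite addr_ge0 ?mulr_ge0 ?u_ge0 //; nra.
- by rewrite big_split /= -!mulr_sumr l1 -/S mulr1 subrK.
rewrite mulmx_matrix_rows; under eq_bigr do rewrite scalerBr.
rewrite sumrB -scaler_suml -/S.
under [RHS]eq_bigr do rewrite scalerDl -!scalerA.
rewrite big_split /= -!scaler_sumr -pE scalerBr scalerA scalerBl scale1r.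
by rewrite addrA addrAC.
Qed.

End PolytopeCone.

Section RightLimits.
Variable R : realFieldType.

Lemma cvg_at_right_within_itvco {V : pseudoMetricNormedZmodType R} (f : R -> V) a b :
  a < b -> {within `[a, b[, continuous f} -> f x @[x --> a^'+] --> f a.
Proof.
move=> ab cf; have [ac cb] := midf_lt ab.
have sub_ab : `[a, (a + b) / 2] `<=` `[a, b[.
  by move=> x /=; rewrite !in_itv /= => /andP[-> xc]; exact: le_lt_trans xc cb.
by have [] := (continuous_within_itvP _ ac).1 (continuous_subspaceW sub_ab cf).
Qed.

Lemma mx_cvg_entrywise {T : Type} (F : set_system T) {FF : Filter F} m k
    (f : T -> 'M[R]_(m, k)) (l : 'M[R]_(m, k)) :
  (forall i j, (fun x => f x i j) @ F --> l i j) -> f @ F --> l.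
Proof.
move=> fl; apply/cvgrPdist_lt => e e0; near=> x.
rewrite /Num.Def.normr /= mx_normrE; apply: bigmax_lt => // ij _; rewrite !mxE.
move: ij; near: x; apply: filter_forall => -[i j] /=.
by move/cvgrPdist_lt : (fl i j) => /(_ e e0).
Unshelve. all: by end_near. Qed.

End RightLimits.

Section RightDifferenceQuotient.
Variable R : realType.

Lemma difference_quotient_cvg_at_right (f df : R -> R) a b :
  a < b -> {within `[a, b[, continuous f} ->
  (forall t, a < t < b -> is_derive t 1 f (df t)) ->
  df t @[t --> a^'+] --> df a ->
  ((t - a)^-1 * (f t - f a)) @[t --> a^'+] --> df a.
Proof.
move=> ab cf df_f /cvgrPdist_lt df_a; apply/cvgrPdist_lt => e e0.
move: (df_a e e0); rewrite near_withinE => -[d /= d0 near_a].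
near=> t.
have a_lt_t : a < t by near: t; exact: nbhs_right_gt.
have tb : t < b by near: t; exact: nbhs_right_lt.
have td : t < a + d by near: t; apply: nbhs_right_lt; rewrite ltrDl.
have [c] : exists2 c, c \in `]a, t[ & f t - f a = df c * (t - a).
  apply: MVT => // [x|].
    by rewrite in_itv /= => /andP[ax xt]; apply: df_f; rewrite ax (lt_trans xt tb).
  apply: continuous_subspaceW cf => x /=; rewrite !in_itv /= => /andP[-> xt].
  exact: le_lt_trans xt tb.
rewrite in_itv /= => /andP[ac ct] ->.
rewrite mulrC mulfK ?subr_eq0 ?gt_eqF //; apply: near_a => //.
by rewrite /ball /= distrC gtr0_norm ?subr_gt0 //; lra.
Unshelve. all: by end_near. Qed.

Lemma C1_difference_quotient_cvg n r (gamma dg : R -> 'rV[R]_n) :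
  0 < r -> C1_on_halfopen r gamma dg ->
  t^-1 *: (gamma t - gamma 0) @[t --> 0^'+] --> dg 0.
Proof.
move=> r0 [gamma_cont [gamma_der [gamma_dg dg_cont]]].
apply: mx_cvg_entrywise => i j.
have entry_cont (h : R -> 'rV[R]_n) :
    {within `[0, r[, continuous h} ->
    {within `[0, r[, continuous (fun t => h t i j)}.
  move=> hc x; apply: (@continuous_comp (subspace `[0, r[) _ _ h (fun M => M i j)).
    exact: hc.
  exact: coord_continuous.
have entry_der t : 0 < t < r -> is_derive t 1 (fun s => gamma s i j) (dg t i j).
  move=> tr; have /derivable_mxP/(_ i j) gij := gamma_der t tr.
  rewrite -gamma_dg // derive1E (derive_mx (gamma_der t tr)) mxE.
  exact: derivableP.
have -> : (fun t => (t^-1 *: (gamma t - gamma 0)) i j) =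
    (fun t => (t - 0)^-1 * (gamma t i j - gamma 0 i j)).
  by apply/funext => t; rewrite subr0 !mxE.
exact: difference_quotient_cvg_at_right r0 (entry_cont _ gamma_cont) entry_der
  (cvg_at_right_within_itvco r0 (entry_cont _ dg_cont)).
Qed.

End RightDifferenceQuotient.

Theorem lemma5p1 (R : realType) (n : nat) (M : set 'rV[R]_n)
  (r : R) (gamma dg : R -> 'rV[R]_n) :
  convex_polytope M ->
  M° !=set0 ->
  0 < r ->
  (forall t, 0 <= t < r -> M (gamma t)) ->
  C1_on_halfopen r gamma dg ->
  exists2 eps : R, 0 < eps &
    forall t, 0 <= t <= eps -> M (gamma 0 + t *: dg 0).
Proof.
move=> [k [v ->]] _ r0 gamma_in C1.
have dg0_in : conic_hull (\matrix_i (v i - gamma 0)) (dg 0).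
  have := C1_difference_quotient_cvg r0 C1.
  apply: closed_cvg; first exact: conic_hull_closed.
  near=> t.
  have t_pos : 0 < t by near: t; exact: nbhs_right_gt.
  have t_lt_r : t < r by near: t; exact: nbhs_right_lt.
  apply: conic_hullZ; first by rewrite invr_ge0 ltW.
  by apply: conv_hull_fin_sub_conic_hull; apply: gamma_in; rewrite ltW.
apply: conv_hull_fin_add_conic_hull dg0_in.
by apply: gamma_in; rewrite lexx r0.
Unshelve. all: by end_near. Qed.
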